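(* Let $n$ be even, $k\ge2$, and let $f(x)=a_0(x)+2a_1(x)+\cdots+2^{k-1}a_{k-1}(x)$ from $\mathbb{V}_n$ to $\mathbb{Z}_{2^k}$ be gbent. Then its generalized Gray map $\psi(f):\mathbb{V}_n\times\mathbb{F}_2^{k-1}\to\mathbb{F}_2$, $\psi(f)(x,y_0,\ldots,y_{k-2})=\bigoplus_{i=0}^{k-2}a_i(x)y_i\oplus a_{k-1}(x)$, is $(k-1)$-plateaued, i.e. $\mathcal{W}_{\psi(f)}(w)\in\{0,\pm2^{n/2+k-1}\}$ for all $w\in\mathbb{V}_n\times\mathbb{F}_2^{k-1}$.
   Context: $\mathbb{V}_n$ is an $n$-dimensional $\mathbb{F}_2$-vector space with inner product $u\cdot x$; on $\mathbb{V}_n\times\mathbb{F}_2^{k-1}$ use the inner product $(u,z)\cdot(x,y)=u\cdot x\oplus z\cdot y$. $\mathcal{W}_F(w)=\sum_v(-1)^{F(v)\oplus w\cdot v}$. A Boolean function in $N$ variables is $s$-plateaued if its Walsh values lie in $\{0,\pm2^{(N+s)/2}\}$. $f$ is gbent if $|\sum_x\zeta_{2^k}^{f(x)}(-1)^{u\cdot x}|=2^{n/2}$ for all $u$, $\zeta_{2^k}=e^{2\pi i/2^k}$. *)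

From mathcomp Require Import all_boot all_order all_algebra all_field.
Set Implicit Arguments. Unset Strict Implicit. Unset Printing Implicit Defensive.
Import GRing.Theory Num.Theory.
Local Open Scope ring_scope.

Definition vec (n : nat) := {ffun 'I_n -> bool}.

Definition dotb (n : nat) (u x : vec n) : bool :=
  \big[addb/false]_(i < n) (u i && x i).

Definition sgn (b : bool) : algC := (-1) ^+ b.

Definition walsh (T : finType) (dot : T -> T -> bool) (F : T -> bool) (w : T) : algC :=
  \sum_(v : T) sgn (F v (+) dot w v).

(* zeta_{2^k} = e^{2 pi i / 2^k} = e^{i pi / 2^(k-1)} = (2^(k-1)).-root (-1) *)
Definition zeta (k : nat) : algC := (2 ^ k.-1)%N.-root (-1).

(* f = a_0 + 2 a_1 + ... + 2^(k-1) a_(k-1), as a natural number in [0, 2^k) *)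
Definition gfun (n k : nat) (a : 'I_k -> vec n -> bool) (x : vec n) : nat :=
  (\sum_(i < k) 2 ^ i * a i x)%N.

Definition gbent (n k : nat) (a : 'I_k -> vec n -> bool) : Prop :=
  forall u : vec n,
    `| \sum_(x : vec n) zeta k ^+ gfun a x * sgn (dotb u x) | = sqrtC (2%:R ^+ n).

Definition ext_dot (n m : nat) (w v : (vec n * vec m)%type) : bool :=
  dotb w.1 v.1 (+) dotb w.2 v.2.

Definition gray (n k : nat) (a : 'I_k.+2 -> vec n -> bool)
    (v : (vec n * vec k.+1)%type) : bool :=
  (\big[addb/false]_(i < k.+1) (a (widen_ord (leqnSn _) i) v.1 && v.2 i))
    (+) a ord_max v.1.

From mathcomp Require Import all_boot all_order all_algebra all_field.
From mathcomp Require Import ring zify.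
Set Implicit Arguments. Unset Strict Implicit. Unset Printing Implicit Defensive.
Import GRing.Theory Num.Theory.
Local Open Scope ring_scope.

(* Let [z] be a primitive [2^k]-th root of unity. Splitting off the top digit,
   [z^f(x) = z^(N (a_0(x), ..., a_(k-2)(x))) (-1)^(a_(k-1)(x))], where [N y] is the
   integer with binary digits [y]; grouping the gbent sum by these digits gives
   [al = sum_y S_y z^(N y)], and summing the Gray map over its last [k - 1]
   variables gives [W_psi(u, y) = 2^(k-1) S_y], with the same integers [S_y].
   Gbentness says [al al^* = 2^n]. In [Z[z]] the element [1 - z] is prime and
   [2] is [(1 - z)^(2^(k-1))] up to a unit, so [al = 2^(n/2) b] with [b b^* = 1].
   Averaging [|sigma b|^2] over the Galois automorphisms [sigma] shows that the
   integer coordinates of [b] in the basis [1, z, ..., z^(2^(k-1)-1)] have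
   squares summing to [1], so [b = +-z^j], and comparing coordinates of
   [al = +-2^(n/2) z^j] gives [S_y \in {0, +-2^(n/2)}]. *)

Lemma conjC_unity_root n (y : algC) : (0 < n)%N -> y ^+ n = 1 -> y^* = y^-1.
Proof.
move=> n_gt0 yn1; have y1 : `|y| = 1.
  by apply/eqP; rewrite -(pexpr_eq1 n_gt0) ?normr_ge0 // -normrX yn1 normr1.
by rewrite invC_norm y1 expr1n invr1 mul1r.
Qed.

Lemma horner_int_rmorph (f : {rmorphism algC -> algC}) (p : {poly int}) y :
  f (map_poly intr p).[y] = (map_poly intr p).[f y].
Proof.
rewrite -horner_map -map_poly_comp; congr horner.
by apply: eq_map_poly => c /=; rewrite rmorph_int.
Qed.

Lemma oneC_neq_m1 : (1 : algC) != -1.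
Proof. by rewrite -addr_eq0 -(natrD _ 1 1) pnatr_eq0. Qed.

Lemma sum_sqr_int_eq1 (I : finType) (c : I -> int) :
  \sum_i c i ^+ 2 = 1 -> exists j, c j ^+ 2 = 1 /\ forall i, i != j -> c i = 0.
Proof.
move=> Dsum; have [j cj_neq0] : exists j, c j != 0.
  apply/existsP; apply: contra_eqT Dsum => /existsPn c0.
  by rewrite big1 // => i _; move/negPn/eqP: (c0 i) => ->.
rewrite (bigD1 j) //= in Dsum.
have rest_ge0 : 0 <= \sum_(i | i != j) c i ^+ 2 by apply: sumr_ge0 => i _; apply: sqr_ge0.
have [cj2 rest0] : c j ^+ 2 = 1 /\ \sum_(i | i != j) c i ^+ 2 = 0.
  by move: Dsum rest_ge0 cj_neq0; rewrite expr2; set S := \sum_(i | _) _; nia.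
exists j; split => // i neq_ij; apply/eqP; rewrite -sqrf_eq0; apply/eqP.
exact: psumr_eq0P (fun i _ => sqr_ge0 (c i)) rest0 i neq_ij.
Qed.

Section CyclotomicTwoPower.

Variable r : nat.
Local Notation M := (2 ^ r.+1)%N.
Local Notation z := (zeta r.+2).

Lemma exp2S_gt0 : (0 < M)%N. Proof. exact: expn_gt0. Qed.

Lemma exp2S_natr_neq0 : (M%:R : algC) != 0.
Proof. by rewrite pnatr_eq0 -lt0n exp2S_gt0. Qed.

Lemma double_exp2S_gt0 : (0 < 2 * M)%N. Proof. by rewrite muln_gt0 exp2S_gt0. Qed.

Lemma zeta_expM : z ^+ M = -1. Proof. by rewrite /zeta rootCK ?exp2S_gt0. Qed.

Lemma zeta_exp2M : z ^+ (2 * M) = 1.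
Proof. by rewrite mulnC exprM zeta_expM sqrrN expr1n. Qed.

Lemma zeta_neq0 : z != 0.
Proof.
apply/eqP=> z0; have := zeta_expM; rewrite z0 expr0n gtn_eqF ?exp2S_gt0 //.
by move/eqP; rewrite eq_sym oppr_eq0 oner_eq0.
Qed.

Lemma zeta_prim_root : (2 * M).-primitive_root z.
Proof.
have [m prim_m] := prim_order_exists double_exp2S_gt0 zeta_exp2M.
rewrite -expnS => /dvdn_pfactor [//|j]; rewrite leq_eqVlt => /predU1P[-> <- //|lt_j].
move=> Dm; have : z ^+ M = 1.
  by rewrite -[in M](subnKC (ltnSE lt_j)) expnD exprM -Dm (prim_expr_order prim_m) expr1n.
by rewrite zeta_expM => /esym/eqP; rewrite (negbTE oneC_neq_m1).
Qed.

Lemma conjC_zeta : z^* = z^-1.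
Proof. exact: conjC_unity_root double_exp2S_gt0 zeta_exp2M. Qed.

Lemma invC_zeta : z^-1 = - z ^+ M.-1.
Proof.
apply: (mulIf zeta_neq0); rewrite mulVf ?zeta_neq0 // mulNr -exprSr.
by rewrite prednK ?exp2S_gt0 // zeta_expM opprK.
Qed.

Definition Zzeta (x : algC) := exists p : {poly int}, x = (map_poly intr p).[z].

Lemma Zzeta_int (c : int) : Zzeta c%:~R.
Proof. by exists c%:P; rewrite map_polyC hornerC. Qed.

Lemma Zzeta_nat (c : nat) : Zzeta c%:R.
Proof. exact: Zzeta_int c. Qed.

Lemma Zzeta_zeta : Zzeta z.
Proof. by exists 'X; rewrite map_polyX hornerX. Qed.

Lemma ZzetaD x y : Zzeta x -> Zzeta y -> Zzeta (x + y).
Proof. by case=> p -> [q ->]; exists (p + q); rewrite rmorphD hornerD. Qed.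

Lemma ZzetaN x : Zzeta x -> Zzeta (- x).
Proof. by case=> p ->; exists (- p); rewrite rmorphN hornerN. Qed.

Lemma ZzetaB x y : Zzeta x -> Zzeta y -> Zzeta (x - y).
Proof. by move=> Zx /ZzetaN; apply: ZzetaD. Qed.

Lemma ZzetaM x y : Zzeta x -> Zzeta y -> Zzeta (x * y).
Proof. by case=> p -> [q ->]; exists (p * q); rewrite rmorphM hornerM. Qed.

Lemma ZzetaX x n : Zzeta x -> Zzeta (x ^+ n).
Proof.
by move=> Zx; elim: n => [|n IHn]; [apply: Zzeta_nat 1 | rewrite exprS; apply: ZzetaM].
Qed.

Lemma Zzeta_sum (I : Type) (s : seq I) (P : pred I) (F : I -> algC) :
  (forall i, P i -> Zzeta (F i)) -> Zzeta (\sum_(i <- s | P i) F i).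
Proof. by move=> ZF; apply: big_ind => //; [apply: Zzeta_nat 0 | apply: ZzetaD]. Qed.

Lemma Zzeta_horner (p : {poly int}) y : Zzeta y -> Zzeta (map_poly intr p).[y].
Proof.
move=> Zy; rewrite horner_coef; apply: Zzeta_sum => i _.
by rewrite coef_map; apply: ZzetaM; [apply: Zzeta_int | apply: ZzetaX].
Qed.

Lemma Zzeta_zetaV : Zzeta z^-1.
Proof. by rewrite invC_zeta; apply/ZzetaN/ZzetaX/Zzeta_zeta. Qed.

Lemma ZzetaC x : Zzeta x -> Zzeta x^*.
Proof.
by case=> p ->; rewrite horner_int_rmorph /= conjC_zeta; apply/Zzeta_horner/Zzeta_zetaV.
Qed.

Lemma Zzeta_Aint x : Zzeta x -> x \in Aint.
Proof.
case=> p ->; rewrite horner_coef; apply: rpred_sum => i _.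
rewrite coef_map; apply: rpredM; first exact: Aint_int.
apply/rpredX/(Aint_unity_root double_exp2S_gt0).
by rewrite unity_rootE zeta_exp2M.
Qed.

Lemma Zzeta_coord x :
  Zzeta x -> exists c : nat -> int, x = \sum_(j < M) (c j)%:~R * z ^+ j.
Proof.
case=> p ->; elim/poly_ind: p => [|p a [c IHc]].
  by exists (fun=> 0); rewrite rmorph0 horner0 big1 // => j _; rewrite mul0r.
rewrite rmorphD rmorphM /= map_polyX map_polyC hornerMXaddC IHc.
exists (fun j => if j == 0%N then a - c M.-1 else c j.-1).
have zM : z ^+ M.-1.+1 = -1 by rewrite prednK ?zeta_expM ?exp2S_gt0.
rewrite -(prednK exp2S_gt0) mulr_suml big_ord_recr big_ord_recl /= expr0 mulr1.
under eq_bigr => i _ do rewrite -mulrA -exprSr.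
under [in RHS]eq_bigr => i _ do rewrite /bump leq0n add1n.
by rewrite -mulrA -exprSr zM intrB; ring.
Qed.

Definition dvz (d x : algC) := exists2 y, Zzeta y & x = d * y.

Lemma dvzD d x y : dvz d x -> dvz d y -> dvz d (x + y).
Proof. by case=> a Za -> [b Zb ->]; exists (a + b); [apply: ZzetaD | rewrite mulrDr]. Qed.

Lemma dvzMr d x c : dvz d x -> Zzeta c -> dvz d (x * c).
Proof. by case=> a Za -> Zc; exists (a * c); [apply: ZzetaM | rewrite mulrA]. Qed.

Definition pi : algC := 1 - z.

Lemma Zzeta_pi : Zzeta pi.
Proof. exact/ZzetaB/Zzeta_zeta/(Zzeta_nat 1). Qed.

Lemma pi_neq0 : pi != 0.
Proof.
rewrite subr_eq0 eq_sym; apply: contra_eqN zeta_expM => /eqP->.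
by rewrite expr1n oneC_neq_m1.
Qed.

Lemma conjC_pi : pi^* = - pi / z.
Proof.
rewrite /pi rmorphB rmorph1 /= conjC_zeta mulNr mulrBl mul1r divff ?zeta_neq0 //.
by rewrite opprB.
Qed.

Lemma dvz_piC x : dvz pi x -> dvz pi x^*.
Proof.
case=> y Zy ->; exists (- y^* / z); last by rewrite rmorphM /= conjC_pi; ring.
exact/ZzetaM/Zzeta_zetaV/ZzetaN/ZzetaC.
Qed.

(* At [i = r + 1], where [z^(2^i) = -1], this lemma and the next show that
   [2] and [pi^M] divide each other. *)
Lemma pi_exp2_dvz_sub i :
  (i <= r.+1)%N -> exists2 e, Zzeta e & 1 - z ^+ (2 ^ i) = pi ^+ (2 ^ i) * e.
Proof.
elim: i => [_|i IHi lt_i]; first by exists 1; [apply: Zzeta_nat 1 | rewrite mulr1].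
have [e Ze De] := IHi (ltnW lt_i); set w := z ^+ (2 ^ i) in De *.
have wM : w ^+ (2 ^ (r.+1 - i)) = -1 by rewrite -exprM -expnD subnKC ?zeta_expM // ltnW.
set E := \sum_(l < (2 ^ (r.+1 - i)).+1) w ^+ l.
have DE : (1 - w) * E = 1 + w by rewrite -opprB mulNr -subrX1 opprB exprS wM; ring.
exists (e ^+ 2 * E).
  by apply: ZzetaM; [apply: ZzetaX | apply: Zzeta_sum => l _; apply/ZzetaX/ZzetaX/Zzeta_zeta].
rewrite expnSr !exprM -/w.
have -> : 1 - w ^+ 2 = (1 - w) * ((1 - w) * E) by rewrite DE; ring.
by rewrite De; ring.
Qed.

Lemma pi_exp2_sub_dvz2 i :
  exists2 h, Zzeta h & pi ^+ (2 ^ i) = 1 - z ^+ (2 ^ i) + 2%:R * h.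
Proof.
elim: i => [|i [h Zh IHh]]; first by exists 0; [apply: Zzeta_nat 0 | rewrite mulr0 addr0].
set w := z ^+ (2 ^ i) in IHh *.
have Zw : Zzeta w by apply/ZzetaX/Zzeta_zeta.
have Z2 : Zzeta 2%:R by apply: Zzeta_nat.
exists (w ^+ 2 - w + 2%:R * h * (1 - w) + 2%:R * h ^+ 2); last first.
  by rewrite expnSr !exprM -/w IHh; ring.
have Z1w : Zzeta (1 - w) by apply: ZzetaB => //; apply: Zzeta_nat 1.
apply: ZzetaD; last by apply: ZzetaM => //; apply: ZzetaX.
apply: ZzetaD; first by apply: ZzetaB => //; apply: ZzetaX.
by apply: ZzetaM => //; apply: ZzetaM.
Qed.

Lemma two_dvz_pi_expM : exists2 e, Zzeta e & 2%:R = pi ^+ M * e.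
Proof.
have [e Ze De] := pi_exp2_dvz_sub (leqnn r.+1).
by exists e; rewrite // -De zeta_expM opprK.
Qed.

Lemma pi_expM_dvz_two : exists2 h, Zzeta h & pi ^+ M = 2%:R * h.
Proof.
have [h Zh Dh] := pi_exp2_sub_dvz2 r.+1.
by exists (1 + h); [apply/ZzetaD/Zh/(Zzeta_nat 1) | rewrite Dh zeta_expM; ring].
Qed.

Lemma dvz_pi2 : dvz pi 2%:R.
Proof.
have [e Ze ->] := two_dvz_pi_expM.
exists (pi ^+ M.-1 * e); first exact/ZzetaM/Ze/ZzetaX/Zzeta_pi.
by rewrite mulrA -exprS prednK ?exp2S_gt0.
Qed.

(* Otherwise [1/2 = h y^M] would be a rational algebraic integer. *)
Lemma not_dvz_pi1 : ~ dvz pi 1.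
Proof.
case=> y Zy Dy; have [h Zh Dh] := pi_expM_dvz_two.
have n2 : (2%:R : algC) != 0 by rewrite pnatr_eq0.
have D2 : (2%:R : algC)^-1 = h * y ^+ M.
  by apply: (mulfI n2); rewrite mulfV // mulrA -Dh -exprMn -Dy expr1n.
have Ai : (2%:R : algC)^-1 \in Aint
  by rewrite D2; apply/Zzeta_Aint/ZzetaM => //; apply: ZzetaX.
have Qi : (2%:R : algC)^-1 \in Crat by rewrite rpredV rpred_nat.
have /intrP [m Dm] := Cint_rat_Aint Qi Ai.
have : (1 : algC) = (2 * m)%:~R by rewrite intrM -Dm mulfV.
by move/eqP; rewrite -[1]/(1%:~R) eqr_int => /eqP; lia.
Qed.

Lemma Zzeta_int_add_pi x : Zzeta x -> exists c : int, exists2 q, Zzeta q & x = c%:~R + pi * q.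
Proof.
case=> p ->; elim/poly_ind: p => [|p a [c [q Zq IHq]]].
  by exists 0, 0; [apply: Zzeta_nat 0 | rewrite rmorph0 horner0 mulr0 addr0].
exists (c + a), (q * z - c%:~R); first exact/ZzetaB/Zzeta_int/ZzetaM/Zzeta_zeta.
by rewrite rmorphD rmorphM /= map_polyX map_polyC hornerMXaddC IHq /pi intrD; ring.
Qed.

Lemma dvz_pi_or_subr1 x : Zzeta x -> dvz pi x \/ dvz pi (x - 1).
Proof.
case/Zzeta_int_add_pi=> c [q Zq ->]; have [e Ze De] := dvz_pi2.
have [d [b ->]] : exists d : int, exists b : bool, c = d * 2 + b.
  exists (c %/ 2)%Z, ((c %% 2)%Z == 1); have := divz_eq c 2.
  have := modz_ge0 c (isT : 2 != 0 :> int); have := ltz_pmod c (isT : 0 < 2 :> int).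
  by case: eqP; lia.
have Zq' : Zzeta (d%:~R * e + q) by apply/ZzetaD/Zq/ZzetaM/Ze/Zzeta_int.
by case: b; [right | left]; exists (d%:~R * e + q);
  rewrite // intrD intrM -[2%:~R]/2%:R De /=; ring.
Qed.

Lemma dvz_piM x y : Zzeta x -> Zzeta y -> dvz pi (x * y) -> dvz pi x \/ dvz pi y.
Proof.
move=> Zx Zy [a Za Da].
have [|Dx] := dvz_pi_or_subr1 Zx; first by left.
have [|Dy] := dvz_pi_or_subr1 Zy; first by right.
have [b Zb Db] : dvz pi (x * y - 1).
  have -> : x * y - 1 = (x - 1) * y + (y - 1) by ring.
  exact/dvzD/Dy/dvzMr.
case: not_dvz_pi1; exists (a - b); first exact: ZzetaB.
by rewrite mulrBr -Da -Db; ring.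
Qed.

(* Since [pi] is prime and [pi^* = - pi / z], the [pi]-adic valuation of
   [x x^*] is twice that of [x]. *)
Lemma dvz_pi_exp_normC k x :
  Zzeta x -> dvz (pi ^+ (2 * k)) (x * x^*) -> dvz (pi ^+ k) x.
Proof.
elim: k x => [|k IHk] x Zx [g Zg Dg]; first by exists x; rewrite ?expr0 ?mul1r.
have [y Zy Dx] : dvz pi x.
  have : dvz pi (x * x^*).
    exists (pi ^+ (2 * k).+1 * g); first exact/ZzetaM/Zg/ZzetaX/Zzeta_pi.
    by rewrite Dg mulnS !exprS; ring.
  case/dvz_piM => //; first exact: ZzetaC.
  by move/dvz_piC; rewrite conjCK.
have Dyy : y * y^* = pi ^+ (2 * k) * (- z * g).
  have nz : - pi ^+ 2 / z != 0.
    by rewrite mulf_neq0 ?oppr_eq0 ?expf_neq0 ?invr_eq0 ?pi_neq0 ?zeta_neq0.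
  apply: (mulfI nz); transitivity (x * x^*); first by rewrite Dx rmorphM /= conjC_pi; ring.
  by rewrite Dg mulnS exprD; field; apply: zeta_neq0.
have [c Zc Dy] := IHk y Zy (ex_intro2 _ _ _ (ZzetaM (ZzetaN Zzeta_zeta) Zg) Dyy).
by exists c; rewrite // Dx Dy exprS mulrA.
Qed.

(* [2] and [pi^M] divide each other, so [2^m] and [pi^(M m)] do as well. *)
Lemma normC_exp2_dvz m x :
  Zzeta x -> x * x^* = 2%:R ^+ (2 * m) -> exists2 b, Zzeta b & x = 2%:R ^+ m * b.
Proof.
move=> Zx Dxx; have [e Ze De] := two_dvz_pi_expM; have [h Zh Dh] := pi_expM_dvz_two.
have [c Zc ->] : dvz (pi ^+ (M * m)) x.
  apply: dvz_pi_exp_normC => //; exists (e ^+ (2 * m)); first exact: ZzetaX.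
  by rewrite Dxx De exprMn -!exprM mulnCA.
by exists (h ^+ m * c); [apply: ZzetaM => //; apply: ZzetaX | rewrite exprM Dh exprMn mulrA].
Qed.

Lemma sum_zeta_odd_exp a b : (a < M)%N -> (b < M)%N ->
  \sum_(t < M) (z ^+ a / z ^+ b) ^+ (2 * t + 1) = if a == b then M%:R else 0.
Proof.
move=> lt_aM lt_bM; case: eqP => [->|neq_ab].
  under eq_bigr => t _ do rewrite divff ?expr1n ?expf_neq0 ?zeta_neq0 //.
  by rewrite sumr_const card_ord.
set w := z ^+ a / z ^+ b.
have w2_neq1 : w ^+ 2 != 1.
  apply: contra_notN neq_ab => /eqP; rewrite exprMn exprVn -!exprM => /divr1_eq/eqP.
  rewrite (eq_prim_root_expr zeta_prim_root) !modn_small ?eqn_mul2r => [/eqP//||];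
    by rewrite mulnC ltn_pmul2l.
have w2M : (w ^+ 2) ^+ M = 1.
  rewrite -exprM exprMn exprVn -!exprM !(mulnC _ (2 * M)) !(exprM z (2 * M)).
  by rewrite zeta_exp2M !expr1n invr1 mulr1.
have : (w ^+ 2 - 1) * \sum_(t < M) (w ^+ 2) ^+ t = 0 by rewrite -subrX1 w2M subrr.
move/eqP; rewrite mulf_eq0 subr_eq0 (negbTE w2_neq1) /= => /eqP sum0.
by under eq_bigr => t _ do rewrite addn1 exprS exprM; rewrite -mulr_sumr sum0 mulr0.
Qed.

Lemma coprime_odd_double_exp2S t : coprime (2 * t + 1) (2 * M).
Proof. by rewrite -expnS coprimeXr // coprimen2 oddD oddM. Qed.

Definition zeta_aut t : {rmorphism algC -> algC} :=
  sval (Qn_aut_exists (coprime_odd_double_exp2S t)).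

Lemma zeta_autE t y : y ^+ (2 * M) = 1 -> zeta_aut t y = y ^+ (2 * t + 1).
Proof. exact: svalP (Qn_aut_exists (coprime_odd_double_exp2S t)) y. Qed.

Lemma zeta_aut_conjC t x : Zzeta x -> (zeta_aut t x)^* = zeta_aut t x^*.
Proof.
have z2M_eq1 (y : algC) : y ^+ (2 * M) = 1 -> (y ^+ (2 * t + 1)) ^+ (2 * M) = 1.
  by move=> y1; rewrite -exprM mulnC exprM y1 expr1n.
case=> p ->; rewrite !horner_int_rmorph /= conjC_zeta zeta_autE ?zeta_exp2M //.
rewrite zeta_autE ?exprVn ?zeta_exp2M ?invr1 //.
by rewrite (conjC_unity_root double_exp2S_gt0 (z2M_eq1 _ zeta_exp2M)).
Qed.

Lemma zeta_aut_sum_coef (I : finType) (d : I -> int) (e : I -> nat) a :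
  (forall i, e i < M)%N -> (a < M)%N ->
  \sum_(t < M) zeta_aut t (\sum_i (d i)%:~R * z ^+ e i) / (z ^+ a) ^+ (2 * t + 1)
    = M%:R * \sum_(i | e i == a) (d i)%:~R.
Proof.
move=> lt_eM lt_aM; under eq_bigr => t _ do rewrite rmorph_sum mulr_suml.
rewrite exchange_big /= mulr_sumr [RHS]big_mkcond; apply: eq_bigr => i _ /=.
under eq_bigr => t _ do rewrite rmorphM rmorph_int rmorphXn /= zeta_autE ?zeta_exp2M //
  exprAC -mulrA -exprVn -exprMn.
by rewrite -mulr_sumr sum_zeta_odd_exp //; case: eqP; rewrite ?mulr0 // mulrC.
Qed.

Lemma zeta_sum_coef_eq (I J : finType) (d : I -> int) (e : I -> nat)
    (d' : J -> int) (e' : J -> nat) a :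
  (forall i, e i < M)%N -> (forall j, e' j < M)%N -> (a < M)%N ->
  \sum_i (d i)%:~R * z ^+ e i = \sum_j (d' j)%:~R * z ^+ e' j ->
  \sum_(i | e i == a) d i = \sum_(j | e' j == a) d' j.
Proof.
move=> lt_eM lt_e'M lt_aM Dsum; apply: (@intr_inj algC); rewrite !rmorph_sum /=.
by apply: (mulfI exp2S_natr_neq0); rewrite -!zeta_aut_sum_coef // Dsum.
Qed.

Lemma sum_zeta_aut_normC (c : nat -> int) (b := \sum_(j < M) (c j)%:~R * z ^+ j) :
  \sum_(t < M) zeta_aut t b * (zeta_aut t b)^* = M%:R * \sum_(j < M) (c j)%:~R ^+ 2.
Proof.
have Dnorm t : zeta_aut t b * (zeta_aut t b)^* =
    \sum_(j < M) \sum_(l < M) (c j)%:~R * (c l)%:~R * (z ^+ j / z ^+ l) ^+ (2 * t + 1).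
  have zt1 : (z ^+ (2 * t + 1)) ^+ (2 * M) = 1 by rewrite -exprM mulnC exprM zeta_exp2M expr1n.
  rewrite rmorph_sum /= rmorph_sum /= mulr_suml; apply: eq_bigr => j _.
  rewrite mulr_sumr; apply: eq_bigr => l _.
  rewrite !rmorphM /= !rmorph_int !rmorphXn /= zeta_autE ?zeta_exp2M //.
  rewrite (conjC_unity_root double_exp2S_gt0 zt1) exprMn exprVn !(exprAC z (2 * t + 1)).
  by rewrite exprVn; ring.
under eq_bigr => t _ do rewrite Dnorm.
rewrite exchange_big /= mulr_sumr; apply: eq_bigr => j _.
rewrite exchange_big /= (bigD1 j) //= [X in _ + X]big1 => [|l /negbTE neq_lj].
  by rewrite -mulr_sumr sum_zeta_odd_exp // eqxx addr0 mulrC expr2.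
by rewrite -mulr_sumr sum_zeta_odd_exp // eq_sym [(l == j :> nat)]neq_lj mulr0.
Qed.

Lemma zeta_coord_normC1 (c : nat -> int) (b := \sum_(j < M) (c j)%:~R * z ^+ j) :
  b * b^* = 1 -> \sum_(j < M) c j ^+ 2 = 1.
Proof.
move=> Db1; apply: (@intr_inj algC); apply: (mulfI exp2S_natr_neq0).
have Zb : Zzeta b.
  by apply: Zzeta_sum => j _; apply: ZzetaM; [apply: Zzeta_int | apply/ZzetaX/Zzeta_zeta].
rewrite rmorph1 mulr1 rmorph_sum /=; under eq_bigr => j _ do rewrite rmorphXn /=.
rewrite -sum_zeta_aut_normC.
under eq_bigr => t _ do rewrite zeta_aut_conjC // -rmorphM Db1 rmorph1.
by rewrite sumr_const card_ord.
Qed.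

Lemma zeta_sum_normC_exp2 (I : finType) (s : I -> int) (N : I -> nat) m :
    injective N -> (forall i, N i < M)%N ->
    let al := \sum_i (s i)%:~R * z ^+ N i in
  al * al^* = 2%:R ^+ (2 * m) -> forall i, s i \in [:: 0; 2 ^+ m; - 2 ^+ m].
Proof.
move=> N_inj lt_NM al Dnorm i.
have Zal : Zzeta al.
  by apply: Zzeta_sum => i' _; apply: ZzetaM; [apply: Zzeta_int | apply/ZzetaX/Zzeta_zeta].
have [b Zb Dal] := normC_exp2_dvz Zal Dnorm.
have n2m : (2%:R : algC) ^+ m != 0 by rewrite expf_neq0 // pnatr_eq0.
have Dbb : b * b^* = 1.
  apply: (mulfI (mulf_neq0 n2m n2m)); transitivity (al * al^*).
    by rewrite Dal rmorphM rmorphXn rmorph_nat /=; ring.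
  by rewrite Dnorm mulr1 -exprD addnn -mul2n.
have [c Db] := Zzeta_coord Zb; rewrite Db in Dbb.
have [j [cj2 cj0]] := sum_sqr_int_eq1 (zeta_coord_normC1 Dbb).
have Dal1 : al = \sum_(u < 1) (2 ^+ m * c j)%:~R * z ^+ j.
  rewrite big_ord1 Dal Db (bigD1 j) //= big1 ?addr0 => [|l /cj0 ->]; last by rewrite mul0r.
  by rewrite intrM rmorphXn mulrA.
have := zeta_sum_coef_eq (a := N i) lt_NM (fun=> ltn_ord j) (lt_NM i) Dal1.
rewrite (big_pred1 i) => [|i']; last by rewrite /= (inj_eq N_inj).
rewrite big_mkcond big_ord1 /=; case: eqP => _ ->; last by rewrite inE eqxx.
have /orP[] : (c j == 1) || (c j == -1) by rewrite -sqrf_eq1 cj2.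
  by move/eqP->; rewrite !inE mulr1 eqxx orbT.
by move/eqP->; rewrite !inE mulrN1 eqxx !orbT.
Qed.

End CyclotomicTwoPower.

Definition nat_of_bits m (y : vec m) : nat := \sum_(i < m) 2 ^ i * y i.

Lemma nat_of_bitsS m (y : vec m.+1) :
  nat_of_bits y = (y ord0 + 2 * nat_of_bits [ffun i => y (lift ord0 i)])%N.
Proof.
rewrite /nat_of_bits big_ord_recl mul1n big_distrr; congr (_ + _)%N.
by apply: eq_bigr => i _; rewrite ffunE /= /bump leq0n add1n expnS mulnA.
Qed.

Lemma nat_of_bits_lt m (y : vec m) : (nat_of_bits y < 2 ^ m)%N.
Proof.
elim: m y => [|m IHm] y; first by rewrite /nat_of_bits big_ord0.
rewrite nat_of_bitsS expnS; have := IHm [ffun i => y (lift ord0 i)].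
by case: (y ord0) => /=; lia.
Qed.

Lemma nat_of_bits_inj m : injective (@nat_of_bits m).
Proof.
elim: m => [|m IHm] y y' eq_yy'; first by apply/ffunP => -[].
move: eq_yy'; rewrite !nat_of_bitsS => eq_yy'.
have y0 : y ord0 = y' ord0 by move: eq_yy'; case: (y ord0); case: (y' ord0) => //=; lia.
have /ffunP ytail : [ffun i => y (lift ord0 i)] = [ffun i => y' (lift ord0 i)].
  by apply: IHm; move/eqP: eq_yy'; rewrite y0 eqn_add2l eqn_mul2l => /eqP.
apply/ffunP => i; case: (unliftP ord0 i) => [j ->|-> //].
by have := ytail j; rewrite !ffunE.
Qed.

Lemma sum_sgn_dotb m (c d : vec m) :
  \sum_(y : vec m) sgn (dotb c y (+) dotb d y) = if c == d then (2 ^ m)%:R else 0.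
Proof.
have sgn_dotb (e : vec m) y : sgn (dotb e y) = \prod_(i < m) sgn (e i && y i).
  by rewrite /sgn /dotb (@big_morph _ _ (fun b : bool => (-1 : algC) ^+ b) 1 *%R false addb
    (@signr_addb _) (expr0 _)).
have sum_sgn_bool (b1 b2 : bool) :
    \sum_(b : bool) sgn (b1 && b) * sgn (b2 && b) = if b1 == b2 then 2%:R else 0.
  by rewrite big_bool; case: b1; case: b2; rewrite /sgn /=; ring.
under eq_bigr => y _ do rewrite /sgn signr_addb -!/(sgn _) !sgn_dotb -big_split.
rewrite -(bigA_distr_bigA (fun i b => sgn (c i && b) * sgn (d i && b))) /=.
under eq_bigr => i _ do rewrite sum_sgn_bool.
case: eqP => [<-|neq_cd].
  by under eq_bigr => i _ do rewrite eqxx; rewrite prodr_const card_ord natrX.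
have [i neq_i] : exists i, c i != d i.
  apply/existsP; apply: contra_notT neq_cd => /existsPn eq_cd.
  by apply/ffunP => i; apply/eqP/negPn/eq_cd.
by rewrite (bigD1 i) //= (negbTE neq_i) mul0r.
Qed.

Section GrayMap.

Variables (n k : nat) (a : 'I_k.+2 -> vec n -> bool) (u : vec n).

Definition gray_low (x : vec n) : vec k.+1 := [ffun i => a (widen_ord (leqnSn _) i) x].

Definition gray_fiber_sum (y : vec k.+1) : int :=
  \sum_(x | gray_low x == y) (-1) ^+ (a ord_max x (+) dotb u x).

Lemma gray_fiber_sumE y :
  (gray_fiber_sum y)%:~R = \sum_(x | gray_low x == y) sgn (a ord_max x (+) dotb u x).
Proof. by rewrite rmorph_sum; apply: eq_bigr => x _; rewrite rmorphXn rmorphN1. Qed.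

Lemma gfunE x : gfun a x = (nat_of_bits (gray_low x) + 2 ^ k.+1 * a ord_max x)%N.
Proof.
by rewrite /gfun big_ord_recr; congr (_ + _)%N; apply: eq_bigr => i _; rewrite ffunE.
Qed.

Lemma walsh_grayE y :
  walsh (@ext_dot n k.+1) (gray a) (u, y) = (2 ^ k.+1)%:R * (gray_fiber_sum y)%:~R.
Proof.
have sgn_split x y' : sgn (gray a (x, y') (+) ext_dot (u, y) (x, y')) =
    sgn (a ord_max x (+) dotb u x) * sgn (dotb (gray_low x) y' (+) dotb y y').
  rewrite /sgn -signr_addb /gray /ext_dot /= (addbC _ (a ord_max x)) addbACA.
  by congr (_ ^+ (_ (+) (_ (+) _))); apply: eq_bigr => i _; rewrite ffunE.
rewrite /walsh -(pair_bigA _ (fun x y' => sgn (gray a (x, y') (+) ext_dot (u, y) (x, y')))).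
under eq_bigr => x _ do
  rewrite /= (eq_bigr _ (fun y' _ => sgn_split x y')) -mulr_sumr sum_sgn_dotb.
rewrite gray_fiber_sumE mulr_sumr [RHS]big_mkcond; apply: eq_bigr => x _ /=.
by case: eqP; rewrite ?mulr0 // mulrC.
Qed.

Lemma gbent_sumE :
  \sum_(x : vec n) zeta k.+2 ^+ gfun a x * sgn (dotb u x)
    = \sum_(y : vec k.+1) (gray_fiber_sum y)%:~R * zeta k.+2 ^+ nat_of_bits y.
Proof.
under eq_bigr => x _ do rewrite gfunE exprD exprM zeta_expM -mulrA /sgn -signr_addb.
rewrite (partition_big gray_low predT) //=; apply: eq_bigr => y _.
by rewrite gray_fiber_sumE mulr_suml; apply: eq_bigr => x /eqP ->; rewrite mulrC.
Qed.

End GrayMap.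

Theorem proposition6 (n k' : nat) (a : 'I_k'.+2 -> vec n -> bool) :
  ~~ odd n ->
  gbent a ->
  forall w : (vec n * vec k'.+1)%type,
    walsh (@ext_dot n k'.+1) (gray a) w \in
      [:: 0; (2 ^ (n./2 + k'.+1))%:R; - (2 ^ (n./2 + k'.+1))%:R].
Proof.
move=> n_even a_bent [u y].
have Dnorm : let al := \sum_(y : vec k'.+1)
                        (gray_fiber_sum a u y)%:~R * zeta k'.+2 ^+ nat_of_bits y in
    al * al^* = 2%:R ^+ (2 * n./2).
  rewrite /= -gbent_sumE -normCK a_bent sqrtCK.
  by rewrite -[X in 2%:R ^+ X]odd_double_half (negbTE n_even) mul2n.
have := zeta_sum_normC_exp2 (@nat_of_bits_inj _) (@nat_of_bits_lt _) Dnorm y.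
rewrite walsh_grayE !inE !natrX exprD => /or3P[] /eqP ->.
- by rewrite mulr0 eqxx.
- by rewrite rmorphXn /= mulrC eqxx orbT.
- by rewrite rmorphN rmorphXn /= mulrN mulrC eqxx !orbT.
Qed.
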